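(* Let $H$ be an abelian subgroup of $\operatorname{Sym}_n$ and let $S=S_n(H)$. Then $S$ is cancellative if and only if $H_1=H_n=\{\mathrm{id}\}$.
   Context: For a subset $H\subseteq \operatorname{Sym}_n$, $S_n(H)$ denotes the monoid with presentation $\langle a_1,\dots,a_n \mid a_1a_2\cdots a_n = a_{\sigma(1)}a_{\sigma(2)}\cdots a_{\sigma(n)},\ \sigma\in H\rangle$. For a subgroup $H$ of $\operatorname{Sym}_n$ and $1\leq i\leq n$, $H_i=\{\sigma\in H\mid \sigma(i)=i\}$ is the stabilizer of $i$ in $H$; $\mathrm{id}$ is the identity permutation. A monoid is cancellative if it is both left and right cancellative. *)

From HB Require Import structures.
From mathcomp Require Import all_boot all_order all_fingroup.
Set Implicit Arguments. Unset Strict Implicit. Unset Printing Implicit Defensive.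

(* Generators a_1..a_n are the elements of 'I_n (a_{i+1} <-> i : 'I_n).
   Words in the free monoid are sequences of generators. *)

Definition base_word (n : nat) : seq 'I_n := enum 'I_n.

Definition perm_word (n : nat) (s : {perm 'I_n}) : seq 'I_n :=
  map s (base_word n).

(* Two words are equal in
   S_n(H) iff they are related by Scong. *)
Inductive Scong (n : nat) (H : {set {perm 'I_n}}) : seq 'I_n -> seq 'I_n -> Prop :=
| Scong_refl w : Scong H w w
| Scong_step u v s : s \in H ->
    Scong H (u ++ base_word n ++ v) (u ++ perm_word s ++ v)
| Scong_sym w1 w2 : Scong H w1 w2 -> Scong H w2 w1
| Scong_trans w1 w2 w3 : Scong H w1 w2 -> Scong H w2 w3 -> Scong H w1 w3.

Definition Sn_cancellative (n : nat) (H : {set {perm 'I_n}}) : Prop :=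
  (forall x y z : seq 'I_n, Scong H (x ++ y) (x ++ z) -> Scong H y z) /\
  (forall x y z : seq 'I_n, Scong H (y ++ x) (z ++ x) -> Scong H y z).

Definition stab (n : nat) (H : {set {perm 'I_n}}) (i : 'I_n) : {set {perm 'I_n}} :=
  [set s in H | s i == i].

From mathcomp Require Import all_boot all_order all_fingroup.
From Stdlib Require Import Setoid.
Set Implicit Arguments. Unset Strict Implicit. Unset Printing Implicit Defensive.

(* For a set W of words of one common length, the congruence generated by
   identifying any two words of W is left cancellative iff a word of W is
   determined by its first letter.  If so, a derivation (a y) ~ (b z) either
   never touches the first letter, or factors through words (a l), (b l') of W
   followed by a common tail; composing such factorisations needs cancellation
   of the shorter prefix l only, so one cancels by induction on the length.
   Conversely, two words of W with the same first letter have tails of length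
   one less, which after cancellation can no longer be rewritten and so agree.
   The first letter of a_{s(1)}...a_{s(n)} is a_{s(1)}, and s in H is
   determined by s(1) iff H_1 is trivial.  Right cancellativity and H_n are
   handled by reversing words. *)

Inductive wcong (T : Type) (W : seq T -> Prop) : seq T -> seq T -> Prop :=
| wcong_refl x : wcong W x x
| wcong_step u v w w' : W w -> W w' -> wcong W (u ++ w ++ v) (u ++ w' ++ v)
| wcong_trans x y z : wcong W x y -> wcong W y z -> wcong W x z.

Definition wcong_lcancel (T : Type) (W : seq T -> Prop) :=
  forall l y z : seq T, wcong W (l ++ y) (l ++ z) -> wcong W y z.

Definition wcong_rcancel (T : Type) (W : seq T -> Prop) :=
  forall l y z : seq T, wcong W (y ++ l) (z ++ l) -> wcong W y z.

Definition head_determined (T : Type) (W : seq T -> Prop) :=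
  forall a (l m : seq T), W (a :: l) -> W (a :: m) -> l = m.

Definition last_determined (T : Type) (W : seq T -> Prop) :=
  forall a (l m : seq T), W (rcons l a) -> W (rcons m a) -> l = m.

Section WordCongruence.

Variables (T : Type) (W : seq T -> Prop).

Lemma wcong_sym x y : wcong W x y -> wcong W y x.
Proof.
elim=> [x0 | u v w w' Hw Hw' | x0 y0 z0 _ IH1 _ IH2].
- exact: wcong_refl.
- exact: wcong_step.
- exact: wcong_trans IH2 IH1.
Qed.

Lemma wcong_catl l x y : wcong W x y -> wcong W (l ++ x) (l ++ y).
Proof.
elim=> [x0 | u v w w' Hw Hw' | x0 y0 z0 _ IH1 _ IH2].
- exact: wcong_refl.
- by have := wcong_step (l ++ u) v Hw Hw'; rewrite -!catA.
- exact: wcong_trans IH1 IH2.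
Qed.

Lemma wcong_rev x y : wcong W x y -> wcong (fun w => W (rev w)) (rev x) (rev y).
Proof.
elim=> [x0 | u v w w' Hw Hw' | x0 y0 z0 _ IH1 _ IH2].
- exact: wcong_refl.
- rewrite -(revK w) -(revK w') in Hw Hw'.
  have := @wcong_step _ (fun w => W (rev w)) (rev v) (rev u) _ _ Hw Hw'.
  by rewrite !rev_cat !catA.
- exact: wcong_trans IH1 IH2.
Qed.

End WordCongruence.

Lemma sub_wcong (T : Type) (W1 W2 : seq T -> Prop) x y :
  (forall w, W1 w -> W2 w) -> wcong W1 x y -> wcong W2 x y.
Proof.
move=> W12; elim=> [x0 | u v w w' Hw Hw' | x0 y0 z0 _ IH1 _ IH2].
- exact: wcong_refl.
- by apply: wcong_step; apply: W12.
- exact: wcong_trans IH1 IH2.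
Qed.

Section UniformLength.

Variables (T : Type) (W : seq T -> Prop) (N : nat).
Hypothesis size_W : forall w, W w -> size w = N.

Lemma wcong_size x y : wcong W x y -> size x = size y.
Proof.
elim=> [// | u v w w' Hw Hw' | x0 y0 z0 _ -> _ //].
by rewrite !size_cat (size_W Hw) (size_W Hw').
Qed.

Lemma wcong_short x y : wcong W x y -> size x < N -> x = y.
Proof.
elim=> [// | u v w w' Hw _ | x0 y0 z0 _ IH1 _ IH2 lt_x0N].
  by rewrite !size_cat (size_W Hw) addnCA ltnNge leq_addr.
by rewrite IH1 // IH2 // -IH1.
Qed.

Lemma wcong_lcancel_head_determined : wcong_lcancel W -> head_determined W.
Proof.
move=> cancelW a l m Wal Wam.
have Hlm : wcong W ([:: a] ++ l) ([:: a] ++ m).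
  by have := wcong_step [::] [::] Wal Wam; rewrite /= !cats0.
by apply: wcong_short (cancelW _ _ _ Hlm) _; rewrite -(size_W Wal).
Qed.

Lemma wcong_rcancel_last_determined : wcong_rcancel W -> last_determined W.
Proof.
move=> cancelW a l m Wla Wma.
have Hlm : wcong W (l ++ [:: a]) (m ++ [:: a]).
  by have := wcong_step [::] [::] Wla Wma; rewrite /= !cats0 !cats1.
by apply: wcong_short (cancelW _ _ _ Hlm) _; rewrite -(size_W Wla) size_rcons.
Qed.

Hypothesis W_head : head_determined W.

Definition cancel_upto k :=
  forall l y z, size (l ++ y) <= k -> wcong W (l ++ y) (l ++ z) -> wcong W y z.

Definition head_linked a y b z :=
  (a = b /\ wcong W y z) \/
  exists l l' t, [/\ W (a :: l), W (b :: l'), wcong W y (l ++ t) & wcong W z (l' ++ t)].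

Lemma head_linked_trans k a y c m b z :
  cancel_upto k -> size m <= k ->
  head_linked a y c m -> head_linked c m b z -> head_linked a y b z.
Proof.
move=> cancel_k le_mk.
case=> [[-> Hym] | [l1 [l2 [t [W1 W2 H1 H2]]]]];
case=> [[<- Hmz] | [l3 [l4 [t' [W3 W4 H3 H4]]]]].
- by left; split=> //; apply: wcong_trans Hym Hmz.
- by right; exists l3, l4, t'; split=> //; apply: wcong_trans Hym H3.
- by right; exists l1, l2, t; split=> //; apply: wcong_trans (wcong_sym Hmz) H2.
- have El := W_head W2 W3; subst l3.
  have Htt' : wcong W t t'.
    apply: (cancel_k l2); first by rewrite -(wcong_size H2).
    exact: wcong_trans (wcong_sym H2) H3.
  right; exists l1, l4, t; split=> //.
  exact: wcong_trans H4 (wcong_catl l4 (wcong_sym Htt')).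
Qed.

(* A single rewrite either stays inside the tail or replaces a prefix lying in W. *)
Lemma wcong_head_linked k a y b z :
  cancel_upto k -> size y <= k -> wcong W (a :: y) (b :: z) -> head_linked a y b z.
Proof.
move=> cancel_k le_yk; move Ex: (a :: y) => x; move Ex': (b :: z) => x' Hc.
elim: Hc a y b z le_yk Ex Ex' => {x x'} [x | u v w w' Hw Hw' | x m x' Hxm IH1 _ IH2]
  a y b z le_yk Ex Ex'.
- by move: Ex'; rewrite -Ex => -[<- <-]; left; split=> //; apply: wcong_refl.
- case: u Ex Ex' => [|d u] /= Ex Ex'.
  + case: w Hw Ex => [|c l] Hw /= Ex.
      move: Ex'; rewrite -Ex; case: w' Hw' => [|c' l'] Hw' /=.
        by move=> [<- <-]; left; split=> //; apply: wcong_refl.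
      by have := size_W Hw'; rewrite -(size_W Hw).
    case: w' Hw' Ex' => [|c' l'] Hw' /= Ex'.
      by have := size_W Hw; rewrite -(size_W Hw').
    case: Ex Ex' => -> -> [-> ->].
    by right; exists l, l', v; split=> //; apply: wcong_refl.
  + case: Ex Ex' => -> -> [-> ->].
    by left; split=> //; apply: wcong_step.
- have size_m := wcong_size Hxm; rewrite -Ex in size_m.
  case: m Hxm IH1 IH2 size_m => [|c m] // _ IH1 IH2 [size_m].
  have le_mk : size m <= k by rewrite -size_m.
  exact: head_linked_trans cancel_k le_mk
    (IH1 _ _ _ _ le_yk Ex erefl) (IH2 _ _ _ _ le_mk erefl Ex').
Qed.

Lemma cancel_upto_all k : cancel_upto k.
Proof.
elim: k => [|k IHk] [|c l] y z //= le_lyk Hc.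
have [[_ Hlyz] | [l1 [l2 [t [W1 W2 H1 H2]]]]] := wcong_head_linked IHk le_lyk Hc.
  exact: IHk Hlyz.
have El := W_head W1 W2; subst l2.
exact: IHk le_lyk (wcong_trans H1 (wcong_sym H2)).
Qed.

Lemma head_determined_wcong_lcancel : wcong_lcancel W.
Proof. by move=> l y z; apply: cancel_upto_all. Qed.

End UniformLength.

Lemma wcong_lcancelP (T : Type) (W : seq T -> Prop) (N : nat) :
  (forall w, W w -> size w = N) -> wcong_lcancel W <-> head_determined W.
Proof.
move=> size_W; split; first exact: (wcong_lcancel_head_determined size_W).
exact: head_determined_wcong_lcancel size_W.
Qed.

Lemma wcong_rcancelP (T : Type) (W : seq T -> Prop) (N : nat) :
  (forall w, W w -> size w = N) -> wcong_rcancel W <-> last_determined W.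
Proof.
move=> size_W; split; first exact: (wcong_rcancel_last_determined size_W).
move=> W_last l y z /wcong_rev; rewrite !rev_cat => Hc.
have size_Wrev w : W (rev w) -> size w = N by move/size_W; rewrite size_rev.
have head_Wrev : head_determined (fun w => W (rev w)).
  move=> a l1 m1; rewrite !rev_cons => W1 W2.
  by rewrite -(revK l1) (W_last _ _ _ W1 W2) revK.
have /wcong_rev := head_determined_wcong_lcancel size_Wrev head_Wrev Hc.
by rewrite !revK; apply: sub_wcong => w /=; rewrite revK.
Qed.

Definition perm_words (N : nat) (H : {set {perm 'I_N}}) (w : seq 'I_N) : Prop :=
  exists2 s, s \in H & w = perm_word s.

Section PermWords.

Variable N : nat.
Implicit Types (H : {group {perm 'I_N}}) (s : {perm 'I_N}).

Lemma size_perm_word s : size (perm_word s) = N.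
Proof. by rewrite size_map size_enum_ord. Qed.

Lemma perm_word1 : perm_word (1 : {perm 'I_N}) = base_word N.
Proof. by rewrite /perm_word (eq_map (@perm1 _)) map_id. Qed.

Lemma perm_word_inj : injective (@perm_word N).
Proof. by move=> s s' /eq_in_map Es; apply/permP => x; apply: Es; rewrite mem_enum. Qed.

Lemma ScongE H x y : Scong H x y <-> wcong (perm_words H) x y.
Proof.
split.
- elim=> [w | u v s Hs | w1 w2 _ IH | w1 w2 w3 _ IH1 _ IH2].
  + exact: wcong_refl.
  + by apply: wcong_step; [exists 1%g; rewrite ?group1 ?perm_word1 | exists s].
  + exact: wcong_sym.
  + exact: wcong_trans IH1 IH2.
- elim=> [w | u v w w' [s Hs ->] [s' Hs' ->] | w1 w2 w3 _ IH1 _ IH2].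
  + exact: Scong_refl.
  + exact: Scong_trans (Scong_sym (Scong_step u v Hs)) (Scong_step u v Hs').
  + exact: Scong_trans IH1 IH2.
Qed.

Lemma Sn_cancellativeE H :
  Sn_cancellative H <-> wcong_lcancel (perm_words H) /\ wcong_rcancel (perm_words H).
Proof.
split=> -[cancelL cancelR]; split=> l y z /ScongE Hc; apply/ScongE;
  by [apply: cancelL Hc | apply: cancelR Hc].
Qed.

End PermWords.

Section Stabilizers.

Variables (n : nat) (H : {group {perm 'I_n.+1}}).

Lemma perm_word_cons (s : {perm 'I_n.+1}) :
  perm_word s = s ord0 :: map (s \o lift ord0) (enum 'I_n).
Proof. by rewrite /perm_word /base_word enum_ordSl /= map_comp. Qed.

Lemma perm_word_rcons (s : {perm 'I_n.+1}) :
  perm_word s = rcons (map (s \o widen_ord (leqnSn n)) (enum 'I_n)) (s ord_max).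
Proof. by rewrite /perm_word /base_word enum_ordSr map_rcons map_comp. Qed.

Lemma stab1_injective i :
  stab H i = 1%g -> {in H &, injective (fun s : {perm 'I_n.+1} => s i)}.
Proof.
move=> stab1 s s' Hs Hs' /= Ei.
have : (s' * s^-1)%g \in stab H i by rewrite inE groupM ?groupV //= permM -Ei permK.
by rewrite stab1 in_set1 => /eqP E; apply: (mulIg s^-1%g); rewrite E mulgV.
Qed.

Lemma head_determined_perm_wordsP :
  head_determined (perm_words H) <-> stab H ord0 = 1%g.
Proof.
split=> [head_det | stab1].
- apply/setP=> s; rewrite !inE; apply/andP/eqP => [[Hs /eqP s0] | ->]; last first.
    by rewrite group1 perm1.
  have Ws : perm_words H (perm_word s) by exists s.
  have W1 : perm_words H (perm_word 1) by exists 1%g.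
  rewrite perm_word_cons s0 in Ws; rewrite perm_word_cons perm1 in W1.
  apply: perm_word_inj.
  by rewrite !perm_word_cons s0 perm1 (head_det _ _ _ Ws W1).
- move=> a l m [s Hs]; rewrite perm_word_cons => -[a_s0 ->].
  move=> [s' Hs']; rewrite perm_word_cons => -[a_s'0 ->].
  suff -> : s = s' by [].
  by apply: (stab1_injective stab1) => //=; rewrite -a_s0 -a_s'0.
Qed.

Lemma last_determined_perm_wordsP :
  last_determined (perm_words H) <-> stab H ord_max = 1%g.
Proof.
split=> [last_det | stab1].
- apply/setP=> s; rewrite !inE; apply/andP/eqP => [[Hs /eqP smax] | ->]; last first.
    by rewrite group1 perm1.
  have Ws : perm_words H (perm_word s) by exists s.
  have W1 : perm_words H (perm_word 1) by exists 1%g.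
  rewrite perm_word_rcons smax in Ws; rewrite perm_word_rcons perm1 in W1.
  apply: perm_word_inj.
  by rewrite !perm_word_rcons smax perm1 (last_det _ _ _ Ws W1).
- move=> a l m [s Hs]; rewrite perm_word_rcons => /rcons_inj [-> a_smax].
  move=> [s' Hs']; rewrite perm_word_rcons => /rcons_inj [-> a_s'max].
  suff -> : s = s' by [].
  by apply: (stab1_injective stab1) => //=; rewrite -a_smax -a_s'max.
Qed.

End Stabilizers.

Theorem theorem3p1 (n : nat) (H : {group {perm 'I_n.+1}}) :
  abelian H ->
  (Sn_cancellative H <->
   (stab H ord0 = 1%g /\ stab H ord_max = 1%g)).
Proof.
move=> _.
have size_W w : perm_words H w -> size w = n.+1.
  by case=> s _ ->; apply: size_perm_word.
have lP := wcong_lcancelP size_W; have rP := wcong_rcancelP size_W.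
have hP := head_determined_perm_wordsP H; have tP := last_determined_perm_wordsP H.
by rewrite Sn_cancellativeE lP rP hP tP.
Qed.
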